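(* Let $(G,\cdot)$ and $(H,\circ)$ be loops isotopic under the triple $(A,B,C)$, and suppose the pair satisfies the $\mathcal{T}$ condition with respect to $(A,B,C)$. Then $(G,\cdot)$ is a WIPL if and only if $(H,\circ)$ is a WIPL.
   Context: Maps are written on the right of their arguments ($xU$) and composed left to right: $UV$ means first apply $U$, then $V$. For a loop $(L,\cdot)$ with identity $e$, $x^\rho$ and $x^\lambda$ denote the right and left inverses of $x$ ($x x^\rho=e=x^\lambda x$), and $J_\rho:x\mapsto x^\rho$, $J_\lambda:x\mapsto x^\lambda$, $L_x:y\mapsto xy$, $R_x:y\mapsto yx$ (so $J_\lambda=J_\rho^{-1}$). $L$ is a weak inverse property loop (WIPL) if $xy\cdot z=e$ implies $x\cdot yz=e$ for all $x,y,z\in L$. A triple $(U,V,W)$ of bijections $G\to H$ between loops $(G,\cdot)$ and $(H,\circ)$ is an isotopism if $xU\circ yV=(x\cdot y)W$ for all $x,y\in G$. For the loop $(H,\circ)$ (identity $e'$) the corresponding maps are denoted $J_\rho'$ ($y\mapsto y^{\rho'}$), $J_\lambda'$ ($y\mapsto y^{\lambda'}$), $L_y'$, $R_y'$. The $\mathcal{T}$ condition: if $(G,\cdot)$ and $(H,\circ)$ are loops isotopic under $(A,B,C)$, the pair satisfies the $\mathcal{T}$ condition if $A=B$ and either $J_\rho'=C^{-1}J_\rho B=A^{-1}J_\rho C$ or $J_\lambda'=C^{-1}J_\lambda A=B^{-1}J_\lambda C$. *)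

From Stdlib Require Import Utf8.

Record loop := Loop {
  carrier :> Type;
  op : carrier -> carrier -> carrier;
  unit : carrier;
  op_unit_l : forall x, op unit x = x;
  op_unit_r : forall x, op x unit = x;
  ldiv_unique : forall a b, exists x, op a x = b /\ forall x', op a x' = b -> x' = x;
  rdiv_unique : forall a b, exists y, op y a = b /\ forall y', op y' a = b -> y' = y
}.

Definition is_rinv (L : loop) (x r : L) : Prop := op L x r = unit L.
Definition is_linv (L : loop) (x l : L) : Prop := op L l x = unit L.

Definition WIPL (L : loop) : Prop :=
  forall x y z : L, op L (op L x y) z = unit L -> op L x (op L y z) = unit L.

Definition bij_with {X Y : Type} (f : X -> Y) (g : Y -> X) : Prop :=
  (forall x, g (f x) = x) /\ (forall y, f (g y) = y).

Definition isotopism (G H : loop) (U V W : G -> H) : Prop :=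
  (exists U', bij_with U U') /\ (exists V', bij_with V V') /\
  (exists W', bij_with W W') /\
  forall x y : G, op H (U x) (V y) = W (op G x y).

(* The T condition for (A,B,C), maps written on the right and composed left
   to right (so C^{-1} J_ρ B : y ↦ B((C^{-1} y)^ρ)). Expressed pointwise:
     A = B and either
       J_ρ' = C^{-1} J_ρ B = A^{-1} J_ρ C   or   J_λ' = C^{-1} J_λ A = B^{-1} J_λ C. *)
Definition T_condition (G H : loop) (A B C : G -> H) : Prop :=
  exists (Ainv Binv Cinv : H -> G),
    bij_with A Ainv /\ bij_with B Binv /\ bij_with C Cinv /\
    (forall x, A x = B x) /\
    ( (forall (y : H) (r : G),
          is_rinv G (Cinv y) r -> is_rinv H y (B r)) /\
      (forall (y : H) (r : G),
          is_rinv G (Ainv y) r -> is_rinv H y (C r))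
    \/
      (forall (y : H) (l : G),
          is_linv G (Cinv y) l -> is_linv H y (A l)) /\
      (forall (y : H) (l : G),
          is_linv G (Binv y) l -> is_linv H y (C l)) ).

(* A loop is a WIPL iff  y · (xy)^ρ = x^ρ  for all x, y
   (lemma [WIPL_rinv_iff]).  Suppose A = B, that  xA ∘ yA = (x·y)C  and that
   right inverses are transported by  ((z)C)^ρ' = (z^ρ)A  and
   ((z)A)^ρ' = (z^ρ)C  (the ρ-half of the T condition).  Then for
   a = xA, b = yA we get  b ∘ (a∘b)^ρ' = (y · (xy)^ρ)C  and  a^ρ' = (x^ρ)C,
   so the WIP identity holds in H iff it holds in G, since A is onto and
   C is one-to-one ([WIPL_transfer_rinv]).
   The λ-half of the T condition is the ρ-half for the opposite loops
   (x ·op y = y · x), an isotopism (A,B,C) of the loops becoming an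
   isotopism (B,A,C) of their opposites; since a loop is a WIPL iff its
   opposite is ([WIPL_opposite]), the main theorem follows by applying the
   transfer lemma either to G, H or to their opposites. *)
From Stdlib Require Import Setoid.

Lemma op_cancel_l (L : loop) (a u v : L) : op L a u = op L a v -> u = v.
Proof.
  intros E. destruct (ldiv_unique L a (op L a v)) as [w [_ Hw]].
  rewrite (Hw u E), (Hw v eq_refl). reflexivity.
Qed.

Lemma op_cancel_r (L : loop) (a u v : L) : op L u a = op L v a -> u = v.
Proof.
  intros E. destruct (rdiv_unique L a (op L v a)) as [w [_ Hw]].
  rewrite (Hw u E), (Hw v eq_refl). reflexivity.
Qed.

Lemma rinv_exists (L : loop) (x : L) : exists r, is_rinv L x r.
Proof. destruct (ldiv_unique L x (unit L)) as [r [Hr _]]. exists r. exact Hr. Qed.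

Lemma rinv_unique (L : loop) (x r r' : L) :
  is_rinv L x r -> is_rinv L x r' -> r = r'.
Proof.
  unfold is_rinv. intros Hr Hr'. apply (op_cancel_l L x). rewrite Hr, Hr'.
  reflexivity.
Qed.

Lemma WIPL_rinv_iff (L : loop) : WIPL L <->
  forall x y r s : L,
    is_rinv L (op L x y) r -> is_rinv L x s -> op L y r = s.
Proof.
  unfold is_rinv. split.
  - intros W x y r s Hr Hs. apply (op_cancel_l L x). rewrite Hs.
    apply W. exact Hr.
  - intros Hw x y z Hz. destruct (rinv_exists L x) as [s Hs].
    rewrite (Hw x y z s Hz Hs). exact Hs.
Qed.

Lemma WIPL_converse_iff (L : loop) : WIPL L <->
  forall x y z : L, op L x (op L y z) = unit L -> op L (op L x y) z = unit L.
Proof.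
  split.
  - intros W x y z Hz. destruct (rinv_exists L (op L x y)) as [w Hw].
    assert (Hw' : op L x (op L y w) = unit L) by (apply W; exact Hw).
    rewrite <- Hz in Hw'.
    apply op_cancel_l, op_cancel_l in Hw'. subst w. exact Hw.
  - intros Wc x y z Hz. destruct (rdiv_unique L (op L y z) (unit L)) as [l [Hl _]].
    assert (Hl' : op L (op L l y) z = unit L) by (apply Wc; exact Hl).
    rewrite <- Hz in Hl'.
    apply op_cancel_r, op_cancel_r in Hl'. subst l. exact Hl.
Qed.

Definition opposite (L : loop) : loop :=
  {| carrier := L;
     op := fun x y => op L y x;
     unit := unit L;
     op_unit_l := op_unit_r L;
     op_unit_r := op_unit_l L;
     ldiv_unique := rdiv_unique L;
     rdiv_unique := ldiv_unique L |}.

(* The WIP of the opposite loop is the converse WIP of L, hence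
   being a WIPL is invariant under passing to the opposite loop. *)
Lemma WIPL_opposite (L : loop) : WIPL (opposite L) <-> WIPL L.
Proof.
  rewrite (WIPL_converse_iff L). unfold WIPL; simpl. split.
  - intros W x y z Hz. apply W. exact Hz.
  - intros Wc x y z Hz. apply Wc. exact Hz.
Qed.

Lemma WIPL_transfer_rinv (G H : loop) (A C : G -> H)
  (A_onto : forall a : H, exists x, A x = a)
  (C_inj : forall u v : G, C u = C v -> u = v)
  (isotopy : forall x y : G, op H (A x) (A y) = C (op G x y))
  (rinv_C : forall z r : G, is_rinv G z r -> is_rinv H (C z) (A r))
  (rinv_A : forall z r : G, is_rinv G z r -> is_rinv H (A z) (C r)) :
  WIPL G <-> WIPL H.
Proof.
  rewrite !WIPL_rinv_iff. split.
  - intros W a b r s Hr Hs.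
    destruct (A_onto a) as [x <-], (A_onto b) as [y <-].
    destruct (rinv_exists G (op G x y)) as [t Ht].
    destruct (rinv_exists G x) as [u Hu].
    assert (Er : r = A t).
    { apply (rinv_unique H (op H (A x) (A y))); [exact Hr|].
      rewrite isotopy. apply rinv_C. exact Ht. }
    assert (Es : s = C u).
    { apply (rinv_unique H (A x)); [exact Hs | apply rinv_A; exact Hu]. }
    rewrite Er, Es, isotopy. f_equal. exact (W x y t u Ht Hu).
  - intros W x y t u Ht Hu. apply C_inj. rewrite <- isotopy.
    apply W with (x := A x).
    + rewrite isotopy. apply rinv_C. exact Ht.
    + apply rinv_A. exact Hu.
Qed.

Theorem mainTheorem6 (G H : loop) (A B C : G -> H) :
  isotopism G H A B C ->
  T_condition G H A B C ->
  (WIPL G <-> WIPL H).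
Proof.
  intros [_ [_ [_ Iso]]]
         [Ai [Bi [Ci [[Ai_A A_Ai] [[Bi_B B_Bi] [[Ci_C _] [AB Tcond]]]]]]].
  assert (C_inj : forall u v : G, C u = C v -> u = v).
  { intros u v E. rewrite <- (Ci_C u), E, Ci_C. reflexivity. }
  destruct Tcond as [[rho_C rho_A] | [lam_C lam_B]].
  -
    apply (WIPL_transfer_rinv G H A C).
    + intros a. exists (Ai a). apply A_Ai.
    + exact C_inj.
    + intros x y. rewrite (AB y). apply Iso.
    + intros z r Hr. rewrite AB. apply rho_C. rewrite Ci_C. exact Hr.
    + intros z r Hr. apply rho_A. rewrite Ai_A. exact Hr.
  - (* λ-case: it is the ρ-case for the opposite loops *)
    rewrite <- (WIPL_opposite G), <- (WIPL_opposite H).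
    apply (WIPL_transfer_rinv (opposite G) (opposite H) B C).
    + intros b. exists (Bi b). apply B_Bi.
    + exact C_inj.
    + intros x y. simpl. rewrite <- (AB y). apply Iso.
    + intros z l Hl. rewrite <- AB. apply lam_C. rewrite Ci_C. exact Hl.
    + intros z l Hl. apply lam_B. rewrite Bi_B. exact Hl.
Qed.
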